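(* Let $(\alpha_j)_{j\ge0}$ be a deterministic sequence in the open unit disc with only finitely many nonzero terms, and set $\alpha_{-1}:=-1$. Let $\rho_j=(1-|\alpha_j|^2)^{1/2}$, $\Theta_j=\begin{pmatrix}\alpha_j&\rho_j\\ \rho_j&-\overline{\alpha_j}\end{pmatrix}$, $\mathcal{L}=\mathrm{Diag}(\Theta_0,\Theta_2,\dots)$, $\mathcal{M}=\mathrm{Diag}(1,\Theta_1,\Theta_3,\dots)$ and $\mathcal{C}=\mathcal{L}\mathcal{M}$ (infinite matrices indexed by positive integers). Then for every $k\ge2$, $$\mathrm{tr}(\mathcal{C}^k) = -k\sum_{j\ge-1}\overline{\alpha_j}\,\rho_{j+1}^2\rho_{j+2}^2\cdots\rho_{j+k-1}^2\,\alpha_{j+k} + O\Big(k^3\sum_{j\ge-1}|\alpha_j|^3\Big),$$ where the implicit constant in $O$ is absolute.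
   Context: With finitely many nonzero $\alpha_j$, $\mathcal{C}^k$ has only finitely many nonzero diagonal entries, so the trace is a finite sum. *)

(* Complex numbers: an arbitrary numClosedFieldType R. *)
From HB Require Import structures.
From mathcomp Require Import all_boot all_order all_algebra.
From Stdlib Require Import ClassicalEpsilon.
Set Implicit Arguments. Unset Strict Implicit. Unset Printing Implicit Defensive.
Import Order.TTheory GRing.Theory Num.Theory.
Local Open Scope ring_scope.

Section CMV.
Variable R : numClosedFieldType.
Variable alpha : nat -> R.

Definition rho (j : nat) : R := sqrtC (1 - `|alpha j| ^+ 2).

(* Entry (p,q), p,q in {0,1} (false=0,true=1), of Θ_j *)
Definition theta (j : nat) (p q : bool) : R :=
  match p, q with
  | false, false => alpha j
  | false, true => rho j
  | true, false => rho j
  | true, true => - (alpha j)^*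
  end.

(* Infinite matrices indexed by nat; 0-based index i stands for the paper's
   positive index i+1. *)
(* L = Diag(Θ_0, Θ_2, ...): block Θ_{2m} occupies rows/cols 2m, 2m+1. *)
Definition Lmx (i j : nat) : R :=
  if i./2 == j./2 then theta (2 * i./2) (odd i) (odd j) else 0.

(* M = Diag(1, Θ_1, Θ_3, ...): entry (0,0) is 1, block Θ_{2m+1} occupies
   rows/cols 2m+1, 2m+2. *)
Definition Mmx (i j : nat) : R :=
  if (i == 0)%N || (j == 0)%N then (if (i == 0)%N && (j == 0)%N then 1 else 0)
  else if i.-1./2 == j.-1./2 then theta (2 * i.-1./2).+1 (odd i.-1) (odd j.-1)
  else 0.

(* C = L M.  Since M m j = 0 unless |m - j| <= 1, the infinite sum over m
   reduces exactly to m < j + 2. *)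
Definition Cmx (i j : nat) : R := \sum_(m < j.+2) Lmx i m * Mmx m j.

(* C^k.  Since C l j = 0 unless |l - j| <= 2, the infinite sum over l in
   (C^k C) i j reduces exactly to l < j + 3. *)
Fixpoint Cpow (k : nat) : nat -> nat -> R :=
  match k with
  | 0 => fun i j => (i == j)%:R
  | k'.+1 => fun i j => \sum_(l < j.+3) Cpow k' i l * Cmx l j
  end.

(* aext n = α_{n-1}, with the convention α_{-1} = -1. *)
Definition aext (n : nat) : R := if n is n'.+1 then alpha n' else -1.

(* rhoext n = ρ_{n-1} (only used for n >= 1). *)
Definition rhoext (n : nat) : R := sqrtC (1 - `|aext n| ^+ 2).

(* Summand of the main term for j = n - 1 >= -1:
   conj(α_j) ρ_{j+1}^2 ... ρ_{j+k-1}^2 α_{j+k} *)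
Definition main_term (k n : nat) : R :=
  (aext n)^* * (\prod_(1 <= i < k) rhoext (n + i) ^+ 2) * aext (n + k).

End CMV.

(* Sum of a finitely supported sequence: \sum_(i < N) f i for some N beyond
   which f vanishes (chosen by classical choice; the value does not depend
   on the choice when f is finitely supported). *)
Definition fsum (R : nmodType) (f : nat -> R) : R :=
  \sum_(i < epsilon (inhabits 0%N) (fun N => forall i, (N <= i)%N -> f i = 0)) f i.

Definition trC (R : numClosedFieldType) (alpha : nat -> R) (k : nat) : R :=
  fsum (fun i => Cpow alpha k i i).

(* Expand the diagonal entry (i, i) of C^k = L M L M ... (2k factors) as a
   sum over paths: at each factor the current index either stays, with a
   diagonal weight alpha or -conj alpha, or jumps to the other index of its
   2x2 block, with weight rho.  A path that never stays moves monotonically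
   (a "sweep") and cannot return to i; after a single stay it sweeps back in
   the opposite direction and, the number of factors being even, misses i
   again.  A path with exactly two stays returns to i iff exactly k - 1 jumps
   separate the stays, and it then carries the weight
   -conj(alpha_j) rho_{j+1}^2 ... rho_{j+k-1}^2 alpha_{j+k}, once for each of
   the k possible times of the first stay: this is the main term.  Paths with
   at least three stays are grouped by their first three stays; the rest of
   the path sums to an entry of a product of unitary matrices, of modulus at
   most 1, and xyz <= 2 (x^3 + y^3 + z^3) bounds the three diagonal weights.
   As sweeps are injective in their starting index, summing over the (2k)^3
   choices of stay times gives O(k^3 sum_j |alpha_j|^3). *)

From HB Require Import structures.
From mathcomp Require Import all_boot all_order all_algebra.
From mathcomp Require Import zify ring.
From Stdlib Require Import ClassicalEpsilon.
Set Implicit Arguments. Unset Strict Implicit. Unset Printing Implicit Defensive.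
Import Order.TTheory GRing.Theory Num.Theory.
Local Open Scope ring_scope.

Lemma sum_ord_widen (V : nmodType) n m (F : nat -> V) : (n <= m)%N ->
  (forall l, (n <= l)%N -> (l < m)%N -> F l = 0) ->
  \sum_(l < m) F l = \sum_(l < n) F l.
Proof.
move=> le_nm F0; rewrite -!(big_mkord xpredT) (big_cat_nat (leq0n n) le_nm) /=.
rewrite [X in _ + X]big1_seq ?addr0 // => l /andP[_].
by rewrite mem_index_iota => /andP[]; apply: F0.
Qed.

Lemma fsumE (V : nmodType) (f : nat -> V) N : (forall i, (N <= i)%N -> f i = 0) ->
  forall M, (N <= M)%N -> fsum f = \sum_(i < M) f i.
Proof.
move=> fN M le_NM; rewrite /fsum; set N0 := epsilon _ _.
have fN0 : forall i, (N0 <= i)%N -> f i = 0 :=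
  epsilon_spec (inhabits 0%N) (fun N => forall i, (N <= i)%N -> f i = 0) (ex_intro _ N fN).
rewrite -(@sum_ord_widen _ N0 (maxn N0 M)) ?leq_maxl //; last by move=> i le_i _; apply: fN0.
by rewrite (@sum_ord_widen _ M (maxn N0 M)) ?leq_maxr // => i le_i _; apply: fN; lia.
Qed.

Lemma sum_shift (V : nmodType) (f : nat -> V) B u : (u <= B)%N ->
  \sum_(i < B) (if (u <= i)%N then f (i - u)%N else 0) = \sum_(q < B - u) f q.
Proof.
move=> le_uB; rewrite -(big_mkord xpredT f).
rewrite -(big_mkord xpredT (fun i => if (u <= i)%N then f (i - u)%N else 0)).
rewrite (big_cat_nat (leq0n u) le_uB) /= big1_seq ?add0r; last first.
  by move=> i /andP[_]; rewrite mem_index_iota => /andP[_]; rewrite ltnNge => /negbTE ->.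
rewrite -{1}(add0n u) big_addn; apply: eq_bigr => i _.
by rewrite leq_addl addnK.
Qed.

Lemma sum_mul_delta (R : pzSemiRingType) n s (F : nat -> R) :
  \sum_(l < n) F l * (l == s :> nat)%:R = if (s < n)%N then F s else 0.
Proof.
rewrite -(@big_ord1_eq R 0 +%R F s n) [RHS]big_mkcond /=.
by apply: eq_bigr => l _; case: eqP; rewrite ?mulr1 ?mulr0.
Qed.

Lemma ler_sum_inj (R : numDomainType) (h : nat -> R) (f : nat -> nat) B M :
  (forall p, 0 <= h p) -> injective f -> (forall i, (i < B)%N -> (f i < M)%N) ->
  \sum_(i < B) h (f i) <= \sum_(p < M) h p.
Proof.
move=> h_ge0 f_inj fB.
pose fo (i : 'I_B) : 'I_M := Ordinal (fB i (ltn_ord i)).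
have fo_inj : injective fo by move=> i j /(congr1 val) /= /f_inj /val_inj.
have -> : \sum_(i < B) h (f i) = \sum_(i in [set: 'I_B]) h (fo i).
  by apply: eq_bigl => i; rewrite inE.
rewrite -(big_imset (fun j : 'I_M => h j) (in2W fo_inj)) /=.
rewrite [X in _ <= X](bigID (mem (fo @: [set: 'I_B]))) /= lerDl.
by apply: sumr_ge0 => j _; apply: h_ge0.
Qed.

Lemma ler_sum_card (R : numDomainType) n m (F : 'I_m -> R) C :
  (m <= n)%N -> 0 <= C -> (forall u, F u <= C) -> \sum_(u < m) F u <= n%:R * C.
Proof.
move=> le_mn C_ge0 FC; apply: le_trans (ler_sum _ (fun u _ => FC u)) _.
rewrite sumr_const card_ord -[C *+ m]mulr_natl.
by apply: ler_wpM2r; rewrite ?ler_nat.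
Qed.

Section CubeBounds.
Variable R : numDomainType.
Implicit Types a c x y z : R.

Lemma mul_le_sqr_add a c : 0 <= a -> 0 <= c -> a * c <= a ^+ 2 + c ^+ 2.
Proof.
move=> a_ge0 c_ge0; case/orP: (real_leVge (ger0_real a_ge0) (ger0_real c_ge0)) => [ac|ca].
  apply: le_trans (_ : c ^+ 2 <= _); last by rewrite lerDr exprn_ge0.
  by rewrite expr2; apply: ler_wpM2r.
apply: le_trans (_ : a ^+ 2 <= _); last by rewrite lerDl exprn_ge0.
by rewrite expr2; apply: ler_wpM2l.
Qed.

Lemma sqr_mul_le_cube_add a c : 0 <= a -> 0 <= c -> a ^+ 2 * c <= a ^+ 3 + c ^+ 3.
Proof.
move=> a_ge0 c_ge0; case/orP: (real_leVge (ger0_real a_ge0) (ger0_real c_ge0)) => [ac|ca].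
  apply: le_trans (_ : c ^+ 3 <= _); last by rewrite lerDr exprn_ge0.
  by rewrite [c ^+ 3]exprSr; apply: ler_wpM2r => //; rewrite !expr2 ler_pM.
apply: le_trans (_ : a ^+ 3 <= _); last by rewrite lerDl exprn_ge0.
by rewrite [a ^+ 3]exprSr; apply: ler_wpM2l => //; apply: exprn_ge0.
Qed.

Lemma mul3_le_cube_add x y z : 0 <= x -> 0 <= y -> 0 <= z ->
  x * y * z <= 2 * (x ^+ 3 + y ^+ 3 + z ^+ 3).
Proof.
move=> x_ge0 y_ge0 z_ge0.
apply: le_trans (_ : (x ^+ 2 + y ^+ 2) * z <= _).
  by apply: ler_wpM2r => //; apply: mul_le_sqr_add.
apply: le_trans (_ : (x ^+ 3 + z ^+ 3) + (y ^+ 3 + z ^+ 3) <= _).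
  by rewrite mulrDl lerD // sqr_mul_le_cube_add.
have -> : x ^+ 3 + z ^+ 3 + (y ^+ 3 + z ^+ 3) = (x ^+ 3 + y ^+ 3 + z ^+ 3) + z ^+ 3 by ring.
by rewrite mulr2n mulrDl mul1r lerD2l lerDr !addr_ge0 // exprn_ge0.
Qed.

End CubeBounds.

Lemma unitary_block_norm (R : numClosedFieldType) (a rho x y : R) :
  rho^* = rho -> rho ^+ 2 + a * a^* = 1 ->
  `|a * x + rho * y| ^+ 2 + `|- a^* * y + rho * x| ^+ 2 = `|x| ^+ 2 + `|y| ^+ 2.
Proof.
move=> rho_real unit; rewrite !normCK !rmorphD !rmorphM /= !rmorphN /= conjCK rho_real.
transitivity ((rho ^+ 2 + a * a^*) * (x * x^* + y * y^*)); first by ring.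
by rewrite unit mul1r.
Qed.

Lemma exists_bit_double s : exists o m, s = ((o : bool) + m.*2)%N.
Proof. by exists (odd s), s./2; rewrite odd_double_half. Qed.

Definition flip1 (s : nat) := if odd s then s.-1 else s.+1.

Lemma block_entry_dec (R : pzSemiRingType) (f : nat -> bool -> bool -> R) s j :
  (if s./2 == j./2 then f s./2 (odd s) (odd j) else 0) =
  f s./2 (odd s) (~~ odd s) * (flip1 s == j)%:R + f s./2 (odd s) (odd s) * (s == j)%:R.
Proof.
have flipE : (flip1 s == j) = (s./2 == j./2) && (odd j == ~~ odd s).
  by rewrite /flip1; case: ifP => odd_s; apply/eqP/andP => [<-|[/eqP ? /eqP ?]];
    (try split; apply/eqP); lia.
have eqE : (s == j) = (s./2 == j./2) && (odd j == odd s).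
  by apply/eqP/andP => [<-|[/eqP ? /eqP ?]]; [split|]; lia.
rewrite flipE eqE; case: eqP => _ /=; last by rewrite !mulr0 addr0.
by case: (odd s); case: (odd j); rewrite /= ?mulr0 ?mulr1 ?addr0 ?add0r.
Qed.

(** * Path expansion of C^k *)

Section Walk.
Variable R : numClosedFieldType.
Variable alpha : nat -> R.
Local Notation b := (aext alpha).
Local Notation r := (rhoext alpha).

(* In the t-th factor of
   C^k = L M L M ..., the block containing the index s is {s, s+1} when
   [upward t s] and {s-1, s} otherwise; [partner t s] is the other index of
   the block.  The leading 1 of M is the block of alpha_{-1} = -1, whose rho
   vanishes (rhoext0). *)
Definition upward (t s : nat) : bool := ~~ odd (t + s).
Definition partner t s := if upward t s then s.+1 else s.-1.
Definition offdiag t s := if upward t s then r s.+1 else r s.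
Definition diag t s := if upward t s then b s.+1 else - (b s)^*.
Definition factor t := if odd t then Mmx alpha else Lmx alpha.

Lemma rhoext0 : r 0 = 0.
Proof. by rewrite /rhoext /= normrN normr1 expr1n subrr sqrtC0. Qed.

Lemma Lmx_dec s j :
  Lmx alpha s j = offdiag 0 s * (partner 0 s == j)%:R + diag 0 s * (s == j)%:R.
Proof.
rewrite /Lmx (block_entry_dec (fun m => theta alpha (2 * m))).
have [o [m ->]] := exists_bit_double s.
rewrite half_bit_double oddD odd_double addbF /partner /offdiag /diag /upward /flip1.
by case: o; rewrite /= odd_double ?mul2n.
Qed.

Lemma Mmx_dec s j :
  Mmx alpha s j = offdiag 1 s * (partner 1 s == j)%:R + diag 1 s * (s == j)%:R.
Proof.
case: s => [|s].
  rewrite /Mmx /offdiag /diag /partner /= rhoext0 mul0r add0r.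
  by rewrite rmorphN rmorph1 opprK mul1r eq_sym; case: eqP.
have partnerE : partner 1 s.+1 = (flip1 s).+1.
  by rewrite /partner /upward /flip1; do 2!case: ifP; lia.
case: j => [|j]; first by rewrite /Mmx partnerE !mulr0 addr0.
rewrite /Mmx /= (block_entry_dec (fun m => theta alpha (2 * m).+1)) partnerE !eqSS.
have [o [m ->]] := exists_bit_double s.
rewrite half_bit_double oddD odd_double addbF /offdiag /diag /upward.
by case: o; rewrite /= odd_double ?mul2n.
Qed.

Lemma upward_odd t : upward t =1 upward (odd t).
Proof. by move=> s; rewrite /upward !oddD oddb. Qed.

Lemma factor_dec t s j :
  factor t s j = offdiag t s * (partner t s == j)%:R + diag t s * (s == j)%:R.
Proof.
rewrite /factor /offdiag /partner /diag (upward_odd t s).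
by case: (odd t); rewrite ?Mmx_dec ?Lmx_dec.
Qed.

Lemma factor_band t s j : (j.+2 <= s)%N -> factor t s j = 0.
Proof.
move=> le_js; rewrite factor_dec /partner.
have -> : (s == j) = false by apply/eqP; lia.
by case: upward; rewrite (_ : (_ == j) = false) ?mulr0 ?addr0 //; apply/eqP; lia.
Qed.

Lemma upwardSt t s : upward t.+1 s = ~~ upward t s.
Proof. by rewrite /upward addSn oddS negbK. Qed.

Lemma upwardSs t s : upward t s.+1 = ~~ upward t s.
Proof. by rewrite /upward addnS oddS negbK. Qed.

Lemma partnerK t : involutive (partner t).
Proof.
move=> s; rewrite /partner; case up: (upward t s); first by rewrite upwardSs up.
by case: s up => [|s] up; rewrite /= ?up // -[upward t s]negbK -upwardSs up.
Qed.

Lemma offdiag_partner t s : offdiag t (partner t s) = offdiag t s.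
Proof.
rewrite /offdiag /partner; case up: (upward t s); first by rewrite upwardSs up.
by case: s up => [|s] up; rewrite /= ?up // -[upward t s]negbK -upwardSs up.
Qed.

Lemma factor_col t (w : nat -> R) j :
  \sum_(l < j.+2) w l * factor t l j = w j * diag t j + w (partner t j) * offdiag t j.
Proof.
under eq_bigr => l _ do rewrite factor_dec (inv_eq (partnerK t)) mulrDr !mulrA.
rewrite big_split /= (sum_mul_delta _ _ (fun l => w l * offdiag t l)).
rewrite (sum_mul_delta _ _ (fun l => w l * diag t l)) ltnS leqnSn addrC.
rewrite offdiag_partner (_ : (partner t j <= j.+1)%N) //.
by rewrite /partner; case: upward => //; lia.
Qed.

(* [Xprod t0 n s j] is the entry (s, j) of factor t0 * ... * factor (t0 + n - 1),
   expanded along the first factor. *)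
Fixpoint Xprod (t0 n s : nat) {struct n} : nat -> R :=
  match n with
  | 0 => fun j => (s == j)%:R
  | n'.+1 => fun j =>
      offdiag t0 s * Xprod t0.+1 n' (partner t0 s) j + diag t0 s * Xprod t0.+1 n' s j
  end.

Lemma Xprod_recl t0 n s j : Xprod t0 n.+1 s j =
  offdiag t0 s * Xprod t0.+1 n (partner t0 s) j + diag t0 s * Xprod t0.+1 n s j.
Proof. by []. Qed.

Lemma Xprod_recr n t0 s j :
  Xprod t0 n.+1 s j = \sum_(l < j.+2) Xprod t0 n s l * factor (t0 + n) l j.
Proof.
elim: n t0 s j => [|n IH] t0 s j.
  rewrite (eq_bigr (fun l : 'I_j.+2 => factor t0 l j * (l == s :> nat)%:R)); last first.
    by move=> l _; rewrite addn0 mulrC eq_sym.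
  rewrite (sum_mul_delta _ _ (fun l => factor t0 l j)).
  case: ltnP => [_|lt_js]; first by rewrite factor_dec.
  by have := factor_band t0 lt_js; rewrite factor_dec; apply.
rewrite Xprod_recl !IH -addSnnS !big_distrr -big_split /=.
by apply: eq_bigr => l _; rewrite !mulrA -mulrDl.
Qed.

Lemma Cpow_Xprod k i j : Cpow alpha k i j = Xprod 0 k.*2 i j.
Proof.
elim: k j => [|k IH] j //.
have factor_even : factor k.*2 = Lmx alpha by rewrite /factor odd_double.
have factor_odd : factor k.*2.+1 = Mmx alpha by rewrite /factor oddS odd_double.
rewrite doubleS Xprod_recr add0n factor_odd [LHS]/=.
under [LHS]eq_bigr => l _ do rewrite IH.
under [RHS]eq_bigr => m _.
  rewrite Xprod_recr add0n factor_even big_distrl /=.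
  rewrite -(@sum_ord_widen _ m.+2 j.+3
    (fun l => Xprod 0 k.*2 i l * Lmx alpha l m * Mmx alpha m j)).
  - over.
  - by have := ltn_ord m; lia.
  - by move=> l le_ml _; rewrite -factor_even factor_band // mulr0 mul0r.
rewrite exchange_big /=; apply: eq_bigr => l _.
by rewrite /Cmx big_distrr /=; apply: eq_bigr => m _; rewrite mulrA.
Qed.

(** * Sweeps *)

Fixpoint sweep_pos (t0 n s : nat) {struct n} : nat :=
  if n is n'.+1 then sweep_pos t0.+1 n' (partner t0 s) else s.
Fixpoint sweep_wt (t0 n s : nat) {struct n} : R :=
  if n is n'.+1 then offdiag t0 s * sweep_wt t0.+1 n' (partner t0 s) else 1.

Definition sweep t0 n s j := sweep_wt t0 n s * (sweep_pos t0 n s == j)%:R.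
Definition stay_wt t0 u s := sweep_wt t0 u s * diag (t0 + u) (sweep_pos t0 u s).

Lemma sweep_pos_inj t0 n : injective (sweep_pos t0 n).
Proof.
elim: n t0 => [|n IH] t0 s1 s2 //= /IH.
exact: (inv_inj (partnerK t0)).
Qed.

Lemma sweep_pos_le t0 n s : (sweep_pos t0 n s <= s + n)%N.
Proof.
elim: n t0 s => [|n IH] t0 s /=; first by rewrite addn0.
have := IH t0.+1 (partner t0 s); rewrite /partner; case: upward; lia.
Qed.

Lemma sweep_pos_ge t0 n s : (s <= sweep_pos t0 n s + n)%N.
Proof.
elim: n t0 s => [|n IH] t0 s /=; first by rewrite addn0.
have := IH t0.+1 (partner t0 s); rewrite /partner; case: upward; lia.
Qed.

Lemma Xprod_first_stay n t0 s j :
  Xprod t0 n s j = sweep t0 n s j +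
    \sum_(u < n) stay_wt t0 u s * Xprod (t0 + u).+1 (n - u.+1) (sweep_pos t0 u s) j.
Proof.
elim: n t0 s => [|n IH] t0 s; first by rewrite big_ord0 addr0 /sweep /= mul1r.
rewrite Xprod_recl IH big_ord_recl /stay_wt /= addn0 subn1 mul1r.
rewrite mulrDr big_distrr /= /sweep /= -!addrA mulrA; congr (_ + _).
rewrite addrC; congr (_ + _); apply: eq_bigr => u _.
by rewrite !mulrA addSnnS subSS.
Qed.

Definition rprod m n := \prod_(m <= e < n) r e.

Lemma rprod_cat a m c : (a <= m)%N -> (m <= c)%N -> rprod a m * rprod m c = rprod a c.
Proof. by move=> le_am le_mc; rewrite /rprod -big_cat_nat. Qed.

Lemma main_term_rprod k q :
  main_term alpha k q = (b q)^* * rprod q.+1 (q + k) ^+ 2 * b (q + k).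
Proof.
rewrite /main_term /rprod prodrXl; congr (_ * _ ^+ 2 * _).
by symmetry; rewrite -add1n big_addn addKn; apply: eq_bigr => e _; rewrite addnC.
Qed.

Lemma upward_shift t u s : upward (t + u) (s + u) = upward t s.
Proof.
by rewrite /upward (_ : (t + u + (s + u) = t + s + u.*2)%N) ?oddD ?odd_double ?addbF //; lia.
Qed.

Lemma upward_shift_down t u s : (u <= s)%N -> upward (t + u) (s - u) = upward t s.
Proof. by move=> le_us; rewrite /upward (_ : (t + u + (s - u) = t + s)%N) //; lia. Qed.

Lemma upward_after_up t u s : upward t s -> upward (t + u).+1 (s + u) = false.
Proof. by move=> up; rewrite upwardSt upward_shift up. Qed.

Lemma upward_after_down t u s :
  ~~ upward t s -> (u <= s)%N -> upward (t + u).+1 (s - u) = true.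
Proof. by move=> down le_us; rewrite upwardSt upward_shift_down // (negbTE down). Qed.

Lemma sweep_pos_up t0 n s : upward t0 s -> sweep_pos t0 n s = (s + n)%N.
Proof.
elim: n t0 s => [|n IH] t0 s up /=; first by rewrite addn0.
by rewrite /partner up IH ?addSnnS // upwardSt upwardSs negbK.
Qed.

Lemma sweep_pos_down t0 n s : ~~ upward t0 s -> (n <= s)%N -> sweep_pos t0 n s = (s - n)%N.
Proof.
elim: n t0 s => [|n IH] t0 s down le_ns /=; first by rewrite subn0.
case: s down le_ns => [|s] down le_ns //.
by rewrite /partner (negbTE down) IH // upwardSt negbK -[upward t0 s]negbK -upwardSs.
Qed.

Lemma sweep_wt_up t0 n s : upward t0 s -> sweep_wt t0 n s = rprod s.+1 (s + n).+1.
Proof.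
elim: n t0 s => [|n IH] t0 s up; first by rewrite addn0 /rprod big_geq.
rewrite /= /partner /offdiag up IH ?addSnnS; last by rewrite upwardSt upwardSs negbK.
by rewrite /rprod (@big_ltn _ _ _ s.+1) //; lia.
Qed.

Lemma sweep_wt_down t0 n s : ~~ upward t0 s -> (n <= s)%N ->
  sweep_wt t0 n s = rprod (s - n).+1 s.+1.
Proof.
elim: n t0 s => [|n IH] t0 s down le_ns; first by rewrite subn0 /rprod big_geq.
case: s down le_ns => [|s] down le_ns //.
rewrite /= /partner /offdiag (negbTE down) /= IH ?subSS //; last first.
  by rewrite upwardSt negbK -[upward t0 s]negbK -upwardSs.
by rewrite /rprod (@big_nat_recr _ _ _ s.+1) 1?mulrC //; lia.
Qed.

Lemma sweep_wt_down0 t0 n s : ~~ upward t0 s -> (s < n)%N -> sweep_wt t0 n s = 0.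
Proof.
elim: n t0 s => [|n IH] t0 s down lt_sn //.
case: s down lt_sn => [|s] down lt_sn; first by rewrite /= /offdiag (negbTE down) rhoext0 mul0r.
have down' : ~~ upward t0.+1 s by rewrite upwardSt negbK -[upward t0 s]negbK -upwardSs.
by rewrite /= /partner (negbTE down) /= IH ?mulr0.
Qed.

Lemma sweep_upE t0 n s j : upward t0 s ->
  sweep t0 n s j = rprod s.+1 (s + n).+1 * ((s + n)%N == j)%:R.
Proof. by move=> up; rewrite /sweep sweep_pos_up // sweep_wt_up. Qed.

Lemma sweep_downE t0 n s j : ~~ upward t0 s ->
  sweep t0 n s j = if (n <= s)%N then rprod (s - n).+1 s.+1 * ((s - n)%N == j)%:R else 0.
Proof.
move=> down; case: leqP => le_ns; first by rewrite /sweep sweep_pos_down // sweep_wt_down.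
by rewrite /sweep sweep_wt_down0 // mul0r.
Qed.

Lemma stay_wt_up t0 u s : upward t0 s ->
  stay_wt t0 u s = rprod s.+1 (s + u).+1 * b (s + u).+1.
Proof.
by move=> up; rewrite /stay_wt sweep_pos_up // sweep_wt_up // /diag upward_shift up.
Qed.

Lemma stay_wt_down t0 u s : ~~ upward t0 s ->
  stay_wt t0 u s = if (u <= s)%N then rprod (s - u).+1 s.+1 * - (b (s - u))^* else 0.
Proof.
move=> down; case: leqP => le_us; last by rewrite /stay_wt sweep_wt_down0 // mul0r.
by rewrite /stay_wt sweep_pos_down // sweep_wt_down // /diag upward_shift_down // (negbTE down).
Qed.

Lemma sweep_diag t0 n s : (0 < n)%N -> sweep t0 n s s = 0.
Proof.
move=> n_gt0; case up: (upward t0 s).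
  by rewrite sweep_upE // (_ : (_ == s) = false) ?mulr0 //; apply/eqP; lia.
rewrite sweep_downE ?up //; case: leqP => // le_ns.
by rewrite (_ : (_ == s) = false) ?mulr0 //; apply/eqP; lia.
Qed.

Lemma one_stay_diag k i u : (u < k.*2)%N ->
  stay_wt 0 u i * sweep u.+1 (k.*2 - u.+1) (sweep_pos 0 u i) i = 0.
Proof.
move=> lt_uk; case up: (upward 0 i).
  have down : ~~ upward u.+1 (i + u) by rewrite -[u in u.+1]add0n upward_after_up.
  rewrite sweep_pos_up // sweep_downE //; case: leqP => le_ui; last by rewrite mulr0.
  by rewrite (_ : (_ == i) = false) ?mulr0 //; apply/eqP; lia.
have down : ~~ upward 0 i by rewrite up.
case: (leqP u i) => le_ui; last by rewrite stay_wt_down // leqNgt le_ui mul0r.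
have up' : upward u.+1 (i - u) by rewrite -[u in u.+1]add0n upward_after_down.
rewrite sweep_pos_down // sweep_upE //.
by rewrite (_ : (_ == i) = false) ?mulr0 //; apply/eqP; lia.
Qed.

Definition two_stay k i u1 u2 :=
  stay_wt 0 u1 i * stay_wt u1.+1 u2 (sweep_pos 0 u1 i) *
  sweep (u1.+1 + u2).+1 (k.*2 - u1.+1 - u2.+1) (sweep_pos u1.+1 u2 (sweep_pos 0 u1 i)) i.

Definition main_shift k i u := if (u <= i)%N then - main_term alpha k (i - u) else 0.

(* Returning to [i] after exactly two stays forces exactly [k - 1] jumps
   between them. *)
Lemma two_stay_eq0 k i u1 u2 : (u1 < k.*2)%N -> (u2 < k.*2 - u1.+1)%N ->
  u2 != k.-1 -> two_stay k i u1 u2 = 0.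
Proof.
move=> lt_u1 lt_u2 /eqP neq_u2; rewrite /two_stay.
case up: (upward 0 i).
  have down : ~~ upward u1.+1 (i + u1) by rewrite -[u1 in u1.+1]add0n upward_after_up.
  rewrite sweep_pos_up // stay_wt_up //.
  case: (leqP u2 (i + u1)) => le_u2; last by rewrite stay_wt_down // leqNgt le_u2 mulr0 mul0r.
  rewrite sweep_pos_down // sweep_upE ?upward_after_down //.
  by rewrite (_ : (_ == i) = false) ?mulr0 //; apply/eqP; lia.
have down : ~~ upward 0 i by rewrite up.
case: (leqP u1 i) => le_u1; last by rewrite stay_wt_down // leqNgt le_u1 !mul0r.
have up' : upward u1.+1 (i - u1) by rewrite -[u1 in u1.+1]add0n upward_after_down.
rewrite sweep_pos_down // sweep_pos_up // sweep_downE ?upward_after_up //.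
case: leqP => le_u2'; last by rewrite mulr0.
by rewrite (_ : (_ == i) = false) ?mulr0 //; apply/eqP; lia.
Qed.

Lemma two_stay_main k i u1 : (u1 < k)%N ->
  two_stay k i u1 k.-1 = main_shift k i (if upward 0 i then k.-1 - u1 else u1)%N.
Proof.
move=> lt_u1; rewrite /two_stay /main_shift.
case up: (upward 0 i).
  have down : ~~ upward u1.+1 (i + u1) by rewrite -[u1 in u1.+1]add0n upward_after_up.
  rewrite sweep_pos_up // stay_wt_up // (stay_wt_down _ down).
  have -> : (k.-1 - u1 <= i)%N = (k.-1 <= i + u1)%N by apply/idP/idP; lia.
  case: leqP => le_k; last by rewrite mulr0 mul0r.
  rewrite sweep_pos_down // sweep_upE ?upward_after_down //.
  set q := (i + u1 - k.-1)%N.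
  rewrite (_ : (q + _)%N = i) ?eqxx ?mulr1; last by rewrite /q; lia.
  rewrite (_ : (i - _)%N = q); last by rewrite /q; lia.
  have qk : (i + u1).+1 = (q + k)%N by rewrite /q; lia.
  rewrite main_term_rprod qk -(@rprod_cat q.+1 i.+1 (q + k));
    [ring | rewrite /q; lia..].
have down : ~~ upward 0 i by rewrite up.
case: (leqP u1 i) => le_u1; last by rewrite stay_wt_down // leqNgt le_u1 !mul0r.
have up' : upward u1.+1 (i - u1) by rewrite -[u1 in u1.+1]add0n upward_after_down.
rewrite stay_wt_down // le_u1 sweep_pos_down // sweep_pos_up // stay_wt_up //.
rewrite sweep_downE ?upward_after_up //.
set q := (i - u1)%N.
rewrite ifT; last by rewrite /q; lia.
rewrite (_ : (q + k.-1 - _)%N = i) ?eqxx ?mulr1; last by rewrite /q; lia.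
have qk : (q + k.-1).+1 = (q + k)%N by rewrite /q; lia.
rewrite main_term_rprod qk -(@rprod_cat q.+1 i.+1 (q + k));
  [ring | rewrite /q; lia..].
Qed.

Definition three_stay_rem k i :=
  \sum_(u1 < k.*2) \sum_(u2 < k.*2 - u1.+1) \sum_(u3 < k.*2 - u1.+1 - u2.+1)
    let s1 := sweep_pos 0 u1 i in
    let s2 := sweep_pos u1.+1 u2 s1 in
    let s3 := sweep_pos (u1.+1 + u2).+1 u3 s2 in
    stay_wt 0 u1 i * stay_wt u1.+1 u2 s1 * stay_wt (u1.+1 + u2).+1 u3 s2 *
    Xprod ((u1.+1 + u2).+1 + u3).+1 (k.*2 - u1.+1 - u2.+1 - u3.+1) s3 i.

Lemma Xprod_trace_dec k i : (0 < k)%N ->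
  Xprod 0 k.*2 i i =
  \sum_(u1 < k.*2) \sum_(u2 < k.*2 - u1.+1) two_stay k i u1 u2 + three_stay_rem k i.
Proof.
move=> k_gt0; rewrite Xprod_first_stay sweep_diag ?double_gt0 // add0r.
rewrite /three_stay_rem -big_split /=; apply: eq_bigr => [[u1 lt_u1]] _ /=.
rewrite add0n Xprod_first_stay mulrDr one_stay_diag // add0r big_distrr -big_split /=.
apply: eq_bigr => u2 _; rewrite Xprod_first_stay !mulrDr; congr (_ + _).
  by rewrite /two_stay !mulrA.
by rewrite !big_distrr /=; apply: eq_bigr => u3 _; rewrite !mulrA.
Qed.

Lemma sum_two_stay k i : (0 < k)%N ->
  \sum_(u1 < k.*2) \sum_(u2 < k.*2 - u1.+1) two_stay k i u1 u2 = \sum_(u < k) main_shift k i u.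
Proof.
move=> k_gt0.
transitivity (\sum_(u1 < k.*2) if (u1 < k)%N then two_stay k i u1 k.-1 else 0).
  apply: eq_bigr => [[u1 lt_u1]] _ /=.
  rewrite (eq_bigr (fun u2 : 'I_(k.*2 - u1.+1) =>
    two_stay k i u1 k.-1 * (u2 == k.-1 :> nat)%:R)); last first.
    move=> [u2 lt_u2] _ /=; case: eqP => [->|/eqP ne]; first by rewrite mulr1.
    by rewrite mulr0 two_stay_eq0.
  rewrite (sum_mul_delta _ _ (fun=> two_stay k i u1 k.-1)).
  by rewrite (_ : (k.-1 < _)%N = (u1 < k)%N) //; apply/idP/idP; lia.
rewrite (@sum_ord_widen _ k _ (fun u1 => if (u1 < k)%N then two_stay k i u1 k.-1 else 0)).
- rewrite (eq_bigr (fun u1 : 'I_k => two_stay k i u1 k.-1)); last by move=> u _; rewrite ltn_ord.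
  under eq_bigr => u _ do rewrite (two_stay_main _ (ltn_ord u)).
  case: (upward 0 i) => //; rewrite -(big_mkord xpredT (main_shift k i)) big_rev_mkord subn0.
  by apply: eq_bigr => u _; congr main_shift; lia.
- by rewrite -addnn leq_addr.
- by move=> l le_kl _; rewrite ltnNge le_kl.
Qed.

Definition cube2 p := `|b p.+1| ^+ 3 + `|b p| ^+ 3.
Arguments cube2 : simpl never.

Lemma cube2_ge0 p : 0 <= cube2 p.
Proof. by rewrite addr_ge0 ?exprn_ge0. Qed.

Lemma diag_cube_le t p : `|diag t p| ^+ 3 <= cube2 p.
Proof.
rewrite /diag /cube2; case: upward; first by rewrite lerDl exprn_ge0.
by rewrite normrN norm_conjC lerDr exprn_ge0.
Qed.

Section FiniteSupport.
Variable N : nat.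
Hypothesis alpha_supp : forall j, (N <= j)%N -> alpha j = 0.

Lemma aext_eq0 p : (N < p)%N -> b p = 0.
Proof. by case: p => [|p] //= lt_Np; rewrite alpha_supp //; lia. Qed.

Lemma diag_eq0 t p : (N < p)%N -> diag t p = 0.
Proof.
by move=> lt_Np; rewrite /diag; case: upward; rewrite ?aext_eq0 ?rmorph0 ?oppr0 //; lia.
Qed.

Lemma Xprod_trace_eq0 k i : (0 < k)%N -> (N + k.*2 <= i)%N -> Xprod 0 k.*2 i i = 0.
Proof.
move=> k_gt0 le_i; rewrite Xprod_first_stay sweep_diag ?double_gt0 // add0r big1 // => u _.
rewrite /stay_wt diag_eq0 ?mulr0 ?mul0r //.
by have := sweep_pos_ge 0 u i; have := ltn_ord u; lia.
Qed.

Lemma sum_main_shift k B : (N + k < B)%N ->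
  \sum_(i < B) \sum_(u < k) main_shift k i u = - (k%:R * fsum (main_term alpha k)).
Proof.
move=> lt_B; rewrite exchange_big /=.
rewrite (eq_bigr (fun=> - fsum (main_term alpha k))).
  by rewrite sumr_const card_ord mulr_natl mulNrn.
move=> u _; rewrite (sum_shift (fun q => - main_term alpha k q)) ?sumrN; last first.
  by have := ltn_ord u; lia.
congr (- _); symmetry; apply: (@fsumE _ _ N.+1); last by have := ltn_ord u; lia.
by move=> q lt_Nq; rewrite /main_term aext_eq0 ?rmorph0 ?mul0r.
Qed.

Lemma trC_decomp k : (0 < k)%N ->
  trC alpha k =
  - (k%:R * fsum (main_term alpha k)) + \sum_(i < N + k.*2) three_stay_rem k i.
Proof.
move=> k_gt0.
have trace0 i : (N + k.*2 <= i)%N -> Cpow alpha k i i = 0.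
  by move=> le_i; rewrite Cpow_Xprod Xprod_trace_eq0.
rewrite /trC (fsumE trace0 (leqnn _)).
rewrite -(sum_main_shift (B := N + k.*2)); last by rewrite -addnn; lia.
rewrite -big_split /=; apply: eq_bigr => i _.
by rewrite Cpow_Xprod Xprod_trace_dec // sum_two_stay.
Qed.

Lemma sum_cube2_le M :
  \sum_(p < M) cube2 p <= 2 * fsum (fun n => `|b n| ^+ 3).
Proof.
set L := maxn N.+1 M.+1.
rewrite (@fsumE _ _ N.+1 _ L) ?leq_maxl //; last first.
  by move=> p lt_Np; rewrite aext_eq0 ?normr0 ?expr0n.
rewrite mulr2n mulrDl mul1r big_split /=.
have cube_ge0 p : 0 <= `|b p| ^+ 3 by rewrite exprn_ge0.
apply: lerD.
  by apply: (ler_sum_inj cube_ge0 succn_inj) => p; lia.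
by apply: (ler_sum_inj cube_ge0 (@inj_id nat)) => p; lia.
Qed.

End FiniteSupport.

(** * Norm bounds *)

Hypothesis alpha_lt1 : forall j, `|alpha j| < 1.

Lemma aext_le1 n : `|b n| <= 1.
Proof. by case: n => [|n] /=; [rewrite normrN normr1 | exact: ltW]. Qed.

Lemma rhoext_ge0 n : 0 <= r n.
Proof. by rewrite sqrtC_ge0 subr_ge0 exprn_ile1 ?aext_le1. Qed.

Lemma rhoext_sqr n : r n ^+ 2 = 1 - `|b n| ^+ 2.
Proof. exact: sqrtCK. Qed.

Lemma rhoext_le1 n : r n <= 1.
Proof.
by rewrite -(expr_le1 (ltn0Sn 1) (rhoext_ge0 n)) rhoext_sqr lerBlDr lerDl exprn_ge0.
Qed.

Lemma offdiag_norm_le1 t s : `|offdiag t s| <= 1.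
Proof. by rewrite /offdiag; case: upward; rewrite ger0_norm ?rhoext_ge0 ?rhoext_le1. Qed.

Lemma sweep_wt_norm_le1 t0 n s : `|sweep_wt t0 n s| <= 1.
Proof.
elim: n t0 s => [|n IH] t0 s /=; first by rewrite normr1.
by rewrite normrM mulr_ile1 ?offdiag_norm_le1.
Qed.

Definition sqnorm N (v : nat -> R) := \sum_(j < N) `|v j| ^+ 2.

Lemma eq_sqnorm N v w : v =1 w -> sqnorm N v = sqnorm N w.
Proof. by move=> vw; apply: eq_bigr => j _; rewrite vw. Qed.

Lemma sqnormS N v : sqnorm N.+1 v = sqnorm N v + `|v N| ^+ 2.
Proof. by rewrite /sqnorm big_ord_recr. Qed.

Lemma sqnorm_widen N M v : (N <= M)%N -> (forall j, (N <= j)%N -> v j = 0) ->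
  sqnorm M v = sqnorm N v.
Proof.
move=> le_NM v0; apply: (sum_ord_widen (F := fun j => `|v j| ^+ 2)) => // j le_Nj _.
by rewrite v0 // normr0 expr0n.
Qed.

Lemma ler_sqnorm N v j : (j < N)%N -> `|v j| ^+ 2 <= sqnorm N v.
Proof.
move=> lt_jN; rewrite /sqnorm (bigD1 (Ordinal lt_jN)) //= lerDl.
by apply: sumr_ge0 => i _; apply: exprn_ge0.
Qed.

(* Right multiplication by [factor t] acts on the coordinates below
   [m.*2 + odd t] by unitary 2x2 blocks, hence preserves their l2 norm. *)
Lemma sqnorm_mul_factor t (v : nat -> R) m :
  sqnorm (m.*2 + odd t) (fun j => \sum_(l < j.+2) v l * factor t l j) =
  sqnorm (m.*2 + odd t) v.
Proof.
elim: m => [|m IH].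
  rewrite /sqnorm /=; case odd_t: (odd t); rewrite /= ?big_ord0 // !big_ord1 factor_col.
  have up0 : upward t 0 = false by rewrite /upward addn0 odd_t.
  rewrite /offdiag /diag /partner up0 /= rhoext0 mulr0 addr0.
  by rewrite rmorphN rmorph1 opprK mulr1.
set N := (m.*2 + odd t)%N.
rewrite doubleS -/N !sqnormS -!addrA IH; congr (_ + _).
have upN : upward t N by rewrite /upward /N !oddD odd_double; case: (odd t).
have upN1 : upward t N.+1 = false by rewrite upwardSs upN.
rewrite !factor_col /offdiag /diag /partner upN upN1 /=.
rewrite [v N * _]mulrC [v N.+1 * _]mulrC [v N.+1 * (- _)]mulrC [v N * r _]mulrC.
apply: unitary_block_norm; first exact: geC0_conj (rhoext_ge0 _).
by rewrite rhoext_sqr -normCK subrK.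
Qed.

Lemma Xprod_supp n t0 s j : (s + n < j)%N -> Xprod t0 n s j = 0.
Proof.
elim: n t0 s => [|n IH] t0 s lt_j; first by rewrite /=; case: eqP => //; lia.
rewrite Xprod_recl !IH ?mulr0 ?addr0 //; first lia.
by rewrite /partner; case: upward; lia.
Qed.

Lemma sqnorm_Xprod n t0 s N : (s + n < N)%N -> sqnorm N (Xprod t0 n s) = 1.
Proof.
elim: n N => [|n IH] N lt_N.
  rewrite /sqnorm (eq_bigr (fun j : 'I_N => 1 * (j == s :> nat)%:R)); last first.
    by move=> j _ /=; rewrite mul1r eq_sym; case: eqP; rewrite ?normr1 ?normr0 ?expr1n ?expr0n.
  by rewrite (sum_mul_delta _ _ (fun=> 1)) ifT //; lia.
rewrite -(@sqnorm_widen N (N.*2 + odd (t0 + n))); last 2 first.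
- by rewrite -addnn; lia.
- by move=> j le_Nj; rewrite Xprod_supp //; lia.
rewrite (@eq_sqnorm _ _ (fun j => \sum_(l < j.+2) Xprod t0 n s l * factor (t0 + n) l j));
  last by move=> j; rewrite Xprod_recr.
rewrite sqnorm_mul_factor (@sqnorm_widen N) ?IH //; first by lia.
- by rewrite -addnn; lia.
- by move=> j le_Nj; rewrite Xprod_supp //; lia.
Qed.

Lemma Xprod_norm_le1 t0 n s j : `|Xprod t0 n s j| <= 1.
Proof.
rewrite -(expr_le1 (ltn0Sn 1) (normr_ge0 _)).
rewrite -(@sqnorm_Xprod n t0 s (s + n + j).+1); last by lia.
by apply: ler_sqnorm; lia.
Qed.

Lemma stay_wt_norm_le t u s : `|stay_wt t u s| <= `|diag (t + u) (sweep_pos t u s)|.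
Proof. by rewrite /stay_wt normrM ler_piMl ?sweep_wt_norm_le1. Qed.

Lemma norm_three_stays_le (c1 c2 c3 w : R) t1 q1 t2 q2 t3 q3 :
  `|c1| <= `|diag t1 q1| -> `|c2| <= `|diag t2 q2| -> `|c3| <= `|diag t3 q3| ->
  `|w| <= 1 -> `|c1 * c2 * c3 * w| <= 2 * (cube2 q1 + cube2 q2 + cube2 q3).
Proof.
move=> c1_le c2_le c3_le w_le; rewrite !normrM.
apply: le_trans (_ : `|diag t1 q1| * `|diag t2 q2| * `|diag t3 q3| <= _).
  rewrite -[X in _ <= X]mulr1; apply: ler_pM; rewrite ?mulr_ge0 //.
  by apply: ler_pM; rewrite ?mulr_ge0 //; apply: ler_pM.
apply: le_trans (mul3_le_cube_add (normr_ge0 _) (normr_ge0 _) (normr_ge0 _)) _.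
by apply: ler_wpM2l => //; rewrite !lerD ?diag_cube_le.
Qed.

Lemma sum_three_stay_rem_le k B :
  \sum_(i < B) `|three_stay_rem k i| <=
  (k.*2)%:R ^+ 3 * (6 * \sum_(p < B + k.*2) cube2 p).
Proof.
set n := k.*2; set S := \sum_(p < B + n) cube2 p.
have S_ge0 : 0 <= S by apply: sumr_ge0 => p _; apply: cube2_ge0.
have -> : n%:R ^+ 3 * (6 * S) = n%:R * (n%:R * (n%:R * (2 * (S + S + S)))) by ring.
have rem_le i : `|three_stay_rem k i| <=
   \sum_(u1 < n) \sum_(u2 < n - u1.+1) \sum_(u3 < n - u1.+1 - u2.+1)
     let s1 := sweep_pos 0 u1 i in
     let s2 := sweep_pos u1.+1 u2 s1 in
     2 * (cube2 s1 + cube2 s2 + cube2 (sweep_pos (u1.+1 + u2).+1 u3 s2)).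
  apply: le_trans (ler_norm_sum _ _ _) _; apply: ler_sum => u1 _.
  apply: le_trans (ler_norm_sum _ _ _) _; apply: ler_sum => u2 _.
  apply: le_trans (ler_norm_sum _ _ _) _; apply: ler_sum => u3 _.
  by apply: norm_three_stays_le;
    [exact: stay_wt_norm_le.. | exact: Xprod_norm_le1].
apply: le_trans; first by apply: ler_sum => i _; apply: rem_le.
have bound3_ge0 : 0 <= 2 * (S + S + S) by rewrite mulr_ge0 ?addr_ge0.
have bound2_ge0 : 0 <= n%:R * (2 * (S + S + S)) by rewrite mulr_ge0.
have bound1_ge0 : 0 <= n%:R * (n%:R * (2 * (S + S + S))) by rewrite mulr_ge0.
rewrite exchange_big /=; apply: ler_sum_card => // u1.
rewrite exchange_big /=; apply: ler_sum_card => // [|u2]; first by rewrite /n; lia.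
rewrite exchange_big /=; apply: ler_sum_card => // [|u3]; first by rewrite /n; lia.
have := ltn_ord u1; have := ltn_ord u2; have := ltn_ord u3 => lt_u3 lt_u2 lt_u1.
rewrite -mulr_sumr big_split big_split /=; apply: ler_wpM2l => //.
have pos1 i := sweep_pos_le 0 u1 i.
have pos2 i := sweep_pos_le u1.+1 u2 (sweep_pos 0 u1 i).
have pos3 i := sweep_pos_le (u1.+1 + u2).+1 u3 (sweep_pos u1.+1 u2 (sweep_pos 0 u1 i)).
rewrite !lerD //.
- apply: (ler_sum_inj cube2_ge0 (@sweep_pos_inj 0 u1)) => i lt_iB.
  by have := pos1 i; lia.
- apply: (ler_sum_inj cube2_ge0
    (inj_comp (@sweep_pos_inj u1.+1 u2) (@sweep_pos_inj 0 u1))) => i lt_iB /=.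
  by have := pos1 i; have := pos2 i; lia.
- apply: (ler_sum_inj cube2_ge0 (inj_comp (@sweep_pos_inj (u1.+1 + u2).+1 u3)
    (inj_comp (@sweep_pos_inj u1.+1 u2) (@sweep_pos_inj 0 u1)))) => i lt_iB /=.
  by have := pos1 i; have := pos2 i; have := pos3 i; lia.
Qed.

End Walk.

Theorem lemma3p3 :
  exists K : nat,
  forall (R : numClosedFieldType) (alpha : nat -> R),
    (forall j, `|alpha j| < 1) ->
    (exists N, forall j, (N <= j)%N -> alpha j = 0) ->
    forall k : nat, (2 <= k)%N ->
      `| trC alpha k + k%:R * fsum (main_term alpha k) |
        <= K%:R * k%:R ^+ 3 * fsum (fun n => `|aext alpha n| ^+ 3).
Proof.
exists 96%N => R alpha alpha_lt1 [N alpha_supp] k le2k.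
have k_gt0 : (0 < k)%N by lia.
rewrite (trC_decomp alpha_supp k_gt0) addrAC addNr add0r.
apply: le_trans (ler_norm_sum _ _ _) _.
apply: le_trans (sum_three_stay_rem_le alpha_lt1 _ _) _.
have cubes := sum_cube2_le alpha_supp (N + k.*2 + k.*2).
have -> : (k.*2)%:R ^+ 3 * (6 * \sum_(p < N + k.*2 + k.*2) cube2 alpha p) =
          48%:R * k%:R ^+ 3 * \sum_(p < N + k.*2 + k.*2) cube2 alpha p :> R.
  by rewrite -mul2n natrM; ring.
set F := fsum _.
have -> : 96%:R * k%:R ^+ 3 * F = 48%:R * k%:R ^+ 3 * (2 * F) :> R by ring.
by apply: ler_wpM2l => //; rewrite mulr_ge0 ?exprn_ge0.
Qed.
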